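(* For all positive integers $n\geq 2$ and $t$, the domination number of the Sierpiński graph $S(K_n,t)$ is $$\gamma(S(K_n,t))=\left\lceil\frac{n^t}{n+1}\right\rceil.$$
   Context: For a positive integer $n$ let $[n]=\{1,\dots,n\}$. For positive integers $n,t$, the Sierpiński graph $S(K_n,t)$ is the simple graph with vertex set $[n]^t$ (words $v_1v_2\cdots v_t$ with $v_i\in[n]$), in which $u_1\cdots u_t$ and $v_1\cdots v_t$ are adjacent if and only if there is $s\in[t]$ with $u_j=v_j$ for all $j<s$, $u_s\neq v_s$, and $u_j=v_s$ and $v_j=u_s$ for all $j>s$. A set $D$ of vertices of a graph $G$ is dominating if every vertex of $G$ lies in $D$ or is adjacent to a vertex of $D$; the domination number $\gamma(G)$ is the minimum size of a dominating set. *)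

From mathcomp Require Import all_boot.
Set Implicit Arguments. Unset Strict Implicit. Unset Printing Implicit Defensive.

(* Vertices of S(K_n,t): words of length t over the alphabet [n];
   letter positions 1..t are represented by 'I_t (0..t-1), letters by 'I_n. *)
Definition sword (n t : nat) := {ffun 'I_t -> 'I_n}.

Definition sierp_adj (n t : nat) (u v : sword n t) : bool :=
  [exists s : 'I_t,
     [&& [forall j : 'I_t, (j < s) ==> (u j == v j)],
         u s != v s &
         [forall j : 'I_t, (s < j) ==> ((u j == v s) && (v j == u s))]]].

Definition dominating (T : finType) (adj : rel T) (D : {set T}) : bool :=
  [forall x : T, (x \in D) || [exists y in D, adj x y]].

(* Domination number: the minimum size of a dominating set
   (the full vertex set is dominating, so #|T| is a valid start value). *)
Definition domination_number (T : finType) (adj : rel T) : nat :=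
  \big[minn/#|T|]_(D : {set T} | dominating adj D) #|D|.

From mathcomp Require Import all_boot zify.
Set Implicit Arguments. Unset Strict Implicit. Unset Printing Implicit Defensive.

(* A neighbour v of a vertex u either differs from u only in the
   last letter (n - 1 choices), or is the unique "bridge" neighbour: if
   u = p x y^k with x != y then v = p y x^k.  So every closed neighbourhood has
   at most n + 1 vertices, and double counting gives n^t <= (n+1) |D| for every
   dominating set D.

   Read a word from left to right: a letter c opens a block that
   is closed by the next occurrence of c.  Words whose blocks are all closed
   form a dominating code when t is even; for t odd take the words w such that
   c w has this property, for a fixed letter c.  Induction on words shows that
   every word outside the code is adjacent to a codeword, and a two-term linear
   recurrence shows that the code has exactly ceil(n^t/(n+1)) elements. *)

Definition closed_nbhd (T : finType) (adj : rel T) (d : T) : {set T} :=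
  [set x | (x == d) || adj x d].

(* Double counting: a dominating set covers all vertices by the closed
   neighbourhoods of its elements. *)
Lemma dominating_card_bound (T : finType) (adj : rel T) (D : {set T}) k :
  dominating adj D -> (forall d, #|closed_nbhd adj d| <= k) -> #|T| <= #|D| * k.
Proof.
move=> /forallP domD nbhd_k.
apply: (@leq_trans (\sum_(x : T) \sum_(d in D) (x \in closed_nbhd adj d))).
  rewrite -sum1_card; apply: leq_sum => x _.
  have [d dD xd] : exists2 d, d \in D & x \in closed_nbhd adj d.
    case/orP: (domD x) => [xD | /existsP [d /andP [dD xd]]].
      by exists x; rewrite // inE eqxx.
    by exists d; rewrite // inE xd orbT.
  by rewrite (bigD1 d) //= xd.
rewrite exchange_big /= -sum_nat_const; apply: leq_sum => d _.
rewrite (leq_trans _ (nbhd_k d)) // -sum1_card [X in _ <= X]big_mkcond /=.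
by apply: leq_sum => x _; case: (x \in _).
Qed.

Lemma bigmin_nat_attained (I : finType) (P : pred I) (F : I -> nat) x0 m i0 :
  P i0 -> F i0 = m -> m <= x0 -> (forall i, P i -> m <= F i) ->
  \big[minn/x0]_(i | P i) F i = m.
Proof.
move=> P_i0 F_i0 m_x0 m_le; apply/eqP; rewrite eqn_leq; apply/andP; split.
  have : i0 \in index_enum I by rewrite mem_index_enum.
  elim: (index_enum I) => [//|j r IH]; rewrite inE big_cons.
  case/orP=> [/eqP <- | /IH le_r]; first by rewrite P_i0 F_i0 geq_minl.
  by case: (P j) => //; apply: leq_trans (geq_minr _ _) le_r.
by apply: (big_ind (fun x => m <= x)) => // x y mx my; rewrite leq_min mx my.
Qed.

Definition adj_at n t (s : 'I_t) (v u : sword n t) : bool :=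
  [&& [forall j : 'I_t, (j < s) ==> (v j == u j)], v s != u s &
      [forall j : 'I_t, (s < j) ==> ((v j == u s) && (u j == v s))]].

Section Neighbourhood.
Variables (n t : nat) (u : sword n t.+1).

Definition bridge (s : 'I_t.+1) : bool :=
  (u s != u ord_max) && [forall j : 'I_t.+1, (s < j) ==> (u j == u ord_max)].

Definition far_nbr (s : 'I_t.+1) : sword n t.+1 :=
  [ffun j : 'I_t.+1 => if j < s then u j else if s < j then u s else u ord_max].

Lemma adj_at_far v s : s != ord_max -> adj_at s v u -> bridge s /\ v = far_nbr s.
Proof.
move=> s_last /and3P [/forallP pre vs_us /forallP post].
have s_lt : s < @ord_max t.
  by rewrite ltn_neqAle leq_ord andbT; apply: contra s_last => /eqP/val_inj->.
have /eqP u_last : u (@ord_max t) == v s.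
  by have := post ord_max; rewrite s_lt => /andP [].
split.
  apply/andP; split; first by rewrite u_last eq_sym.
  apply/forallP => j; apply/implyP => sj.
  by have := post j; rewrite sj u_last => /andP [].
apply/ffunP => j; rewrite ffunE; case: ltngtP => [js|sj|js].
- by have := pre j; rewrite js => /eqP.
- by have := post j; rewrite sj => /andP [/eqP].
- by rewrite u_last (val_inj js).
Qed.

Lemma bridge_unique s1 s2 : bridge s1 -> bridge s2 -> s1 = s2.
Proof.
move=> /andP [ne1 /forallP post1] /andP [ne2 /forallP post2].
apply/eqP; rewrite -val_eqE; case: ltngtP => // lt.
  by have := post1 s2; rewrite lt /= => eq; rewrite eq in ne2.
by have := post2 s1; rewrite lt /= => eq; rewrite eq in ne1.
Qed.

(* Code of a vertex of the closed neighbourhood of u: its last letter if it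
   agrees with u elsewhere, None for the bridge neighbour. *)
Definition nbhd_code (v : sword n t.+1) : option 'I_n :=
  if [forall j, (j != ord_max) ==> (v j == u j)] then Some (v ord_max) else None.

Lemma code_none_far v : v \in closed_nbhd (@sierp_adj n t.+1) u ->
  ~~ [forall j, (j != ord_max) ==> (v j == u j)] ->
  exists2 s, s != ord_max & adj_at s v u.
Proof.
rewrite inE => /orP [/eqP -> | /existsP [s adj]] agree.
  by case/negP: agree; apply/forallP => j; rewrite eqxx implybT.
exists s => //; apply: contra agree => /eqP s_last.
case/and3P: adj => /forallP pre _ _; apply/forallP => j; apply/implyP => j_last.
by have := pre j; rewrite s_last ltn_neqAle leq_ord andbT => /implyP; apply.
Qed.

Lemma nbhd_code_inj : {in closed_nbhd (@sierp_adj n t.+1) u &, injective nbhd_code}.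
Proof.
move=> v1 v2 N1 N2; rewrite /nbhd_code.
case: ifP => agree1; case: ifP => agree2 //.
  case=> last_eq; apply/ffunP => j; have [-> //|j_last] := eqVneq j ord_max.
  have /eqP -> := implyP (forallP agree1 j) j_last.
  by have /eqP -> := implyP (forallP agree2 j) j_last.
move=> _.
have [s1 s1_last /(adj_at_far s1_last) [b1 ->]] := code_none_far N1 (negbT agree1).
have [s2 s2_last /(adj_at_far s2_last) [b2 ->]] := code_none_far N2 (negbT agree2).
by rewrite (bridge_unique b1 b2).
Qed.

Lemma sierp_nbhd_card : #|closed_nbhd (@sierp_adj n t.+1) u| <= n.+1.
Proof.
have := @leq_card_in _ _ _ (closed_nbhd (@sierp_adj n t.+1) u) nbhd_code_inj.
by rewrite card_option card_ord.
Qed.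

End Neighbourhood.

Lemma sierp_domination_lower n t (D : {set sword n t.+1}) :
  dominating (@sierp_adj n t.+1) D -> (n ^ t.+1 + n) %/ n.+1 <= #|D|.
Proof.
move=> domD; rewrite -ltnS ltn_divLR //.
have := dominating_card_bound domD (@sierp_nbhd_card n t).
by rewrite card_ffun !card_ord; move: (n ^ t.+1) #|D| => N d; nia.
Qed.

Section Words.
Variable T : finType.
Implicit Types (x y c : T) (u v w p : seq T) (s : option T).

(* The block automaton: the state is the letter of the open block, if any;
   a word is accepted when it ends with no open block. *)
Fixpoint accept s w : bool :=
  match w with
  | [::] => s == None
  | x :: w' => if s is Some c then (if x == c then accept None w' else accept s w')
               else accept (Some x) w'
  end.

Lemma accept_nseq c m :
  accept (Some c) (nseq m c) = odd m /\ accept None (nseq m c) = ~~ odd m.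
Proof. by elim: m => [|m [IHs IHn]] //=; rewrite eqxx IHs IHn negbK. Qed.

Definition word_adj u v : Prop :=
  exists p x y k, [/\ x != y, u = p ++ x :: nseq k y & v = p ++ y :: nseq k x].

Lemma word_adj_cons z u v : word_adj u v -> word_adj (z :: u) (z :: v).
Proof. by case=> p [x [y [k [xy -> ->]]]]; exists (z :: p), x, y, k. Qed.

Lemma word_adj_swap x y k : x != y -> word_adj (x :: nseq k y) (y :: nseq k x).
Proof. by move=> xy; exists [::], x, y, k. Qed.

Definition dominated (S : pred (seq T)) w : Prop :=
  S w \/ exists2 v, word_adj w v & S v.

Lemma dominated_cons (S S' : pred (seq T)) z w :
  (forall v, S' (z :: v) = S v) -> dominated S w -> dominated S' (z :: w).
Proof.
move=> SS' [Sw|[v wv Sv]]; first by left; rewrite SS'.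
by right; exists (z :: v); [apply: word_adj_cons | rewrite SS'].
Qed.

Definition prepend s w := if s is Some c then c :: w else w.

Definition odd_constant w := odd (size w) && constant w.

Lemma dominated_accept s w :
  ~~ odd_constant (prepend s w) -> dominated (accept s) w.
Proof.
elim: w s => [|x w IH] [c|] //= oc; first by left.
  have [x_c|xc] := eqVneq x c.
    subst x; case: (boolP (odd_constant w)) => [|not_oc]; last first.
      by apply: dominated_cons (IH None not_oc) => v /=; rewrite eqxx.
    move=> /andP [odd_w /(constantP c) [j Ew]].
    have jc : j != c.
      apply: contra oc => /eqP jc; rewrite /odd_constant /= negbK odd_w Ew jc.
      exact: (constant_nseq _.+2 c).
    right; exists (j :: nseq (size w) c).
      by rewrite {1}Ew; apply: word_adj_swap; rewrite eq_sym.
    by rewrite /= (negbTE jc) (accept_nseq c _).1.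
  case: (boolP (odd_constant (c :: w))) => [|not_oc]; last first.
    by apply: dominated_cons (IH (Some c) not_oc) => v /=; rewrite (negbTE xc).
  move=> /andP [odd_cw /(constantP c) [j [<-{j} Ew]]].
  right; exists (c :: nseq (size w) x); first by rewrite {1}Ew; exact: word_adj_swap.
  by move: odd_cw; rewrite /= eqxx (accept_nseq x _).2.
by apply: dominated_cons (IH (Some x) oc).
Qed.

Definition count_words m (P : pred (seq T)) : nat := \sum_(w : m.-tuple T) P w.

Lemma eq_count_words m (P Q : pred (seq T)) :
  P =1 Q -> count_words m P = count_words m Q.
Proof. by move=> PQ; apply: eq_bigr => w _; rewrite PQ. Qed.

Lemma count_words0 (P : pred (seq T)) : count_words 0 P = P [::].
Proof.
rewrite /count_words (eq_bigr (fun _ => P [::] : nat)) => [|w _]; last by rewrite tuple0.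
by rewrite sum_nat_const card_tuple mul1n.
Qed.

Lemma count_wordsS m (P : pred (seq T)) :
  count_words m.+1 P = \sum_(x : T) count_words m (fun w => P (x :: w)).
Proof.
rewrite /count_words pair_bigA /=.
pose cons_t (xw : T * m.-tuple T) := [tuple of xw.1 :: xw.2].
rewrite (reindex cons_t) //=.
exists (fun w : m.+1.-tuple T => (thead w, [tuple of behead w])) => [[x w] _ | w _] /=.
  by rewrite theadE; congr pair; apply: val_inj.
by rewrite /cons_t [RHS]tuple_eta.
Qed.

Lemma sum_affine (P : pred T) (F : T -> nat) k e r :
  (forall x, k * F x + e = r) -> k * \sum_(x | P x) F x + #|P| * e = #|P| * r.
Proof.
move=> FE; rewrite big_distrr /= -sum_nat_const -big_split /= -sum_nat_const.
by apply: eq_bigr => x _; rewrite FE.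
Qed.

(* Closed form of the number of accepted words of length m, from a state
   with or without an open block; with N = #|T| it says that these counts
   are (N^m + 1)/(N+1) and (N^m - N)/(N+1) for m odd, and (N^m - 1)/(N+1)
   and (N^m + N)/(N+1) for m even. *)
Lemma count_accept m : 0 < #|T| ->
  (forall c, #|T|.+1 * count_words m (accept (Some c)) + ~~ odd m = #|T| ^ m + odd m)
  /\ #|T|.+1 * count_words m (accept None) + #|T| * odd m = #|T| ^ m + #|T| * ~~ odd m.
Proof.
move=> T_gt0; elim: m => [|m [IHs IHn]].
  by split => [c|]; rewrite count_words0 /=; lia.
split => [c|]; rewrite count_wordsS expnS.
  rewrite (bigD1 c) //= eqxx.
  rewrite (eq_bigr (fun _ => count_words m (accept (Some c)))) => [|x xc]; last first.
    by apply: eq_count_words => v; rewrite /= (negbTE xc).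
  have := sum_affine (predC1 c) (fun=> IHs c); rewrite cardC1.
  change (count_words m (fun w => accept None w)) with (count_words m (accept None)).
  by move: T_gt0 IHn; case: (odd m) => /=; nia.
have := sum_affine xpredT IHs; change #|xpredT| with #|T|.
change (\sum_x count_words m (fun w => accept None (x :: w)))
  with (\sum_x count_words m (accept (Some x))).
by move: T_gt0 IHn; rewrite /=; case: (odd m) => /=; nia.
Qed.

End Words.

Definition word n t (f : sword n t) : seq 'I_n := tuple_of_finfun f.

Lemma size_word n t (f : sword n t) : size (word f) = t.
Proof. exact: size_tuple. Qed.

Lemma nth_word n t (f : sword n t) x0 (j : 'I_t) : nth x0 (word f) j = f j.
Proof. by rewrite -tnth_nth tnth_map tnth_ord_tuple. Qed.

Lemma word_adj_sierp n t (f : sword n t) v :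
  word_adj (word f) v -> exists2 g : sword n t, word g = v & sierp_adj f g.
Proof.
case=> p [x [y [k [xy Ef Ev]]]].
have size_v : size v == t by rewrite Ev -(size_word f) Ef !size_cat /= !size_nseq.
exists (finfun_of_tuple (Tuple size_v)); first by rewrite /word finfun_of_tupleK.
set g := finfun_of_tuple _.
have Eg : word g = p ++ y :: nseq k x by rewrite /word finfun_of_tupleK.
have t_eq : t = size p + k.+1 by rewrite -(size_word f) Ef size_cat /= size_nseq.
have fgE (j : 'I_t) : (f j, g j) =
    if j < size p then (nth x p j, nth x p j) else if size p < j then (y, x) else (x, y).
  rewrite -!(nth_word _ x) Ef Eg !nth_cat; case: ltngtP => [//|pj|->]; last by rewrite subnn.
  rewrite -(subnSK pj) /= !nth_nseq.
  have jk : j - (size p).+1 < k.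
    by move: (ltn_ord j) pj t_eq; move: (nat_of_ord j) (size p) => jn sp; lia.
  by rewrite jk.
have lt_p : size p < t by rewrite t_eq; lia.
apply/existsP; exists (Ordinal lt_p); apply/and3P; split.
- apply/forallP => j; apply/implyP => /= jp.
  by have := fgE j; rewrite jp => -[-> ->].
- by have := fgE (Ordinal lt_p); rewrite /= ltnn => -[-> ->].
- apply/forallP => j; apply/implyP => /= pj.
  have := fgE j; have := fgE (Ordinal lt_p); rewrite /= ltnn pj ltnNge (ltnW pj) /=.
  by move=> [-> ->] [-> ->]; rewrite !eqxx.
Qed.

Lemma count_sword n t (P : pred (seq 'I_n)) :
  #|[set f : sword n t | P (word f)]| = count_words t P.
Proof.
rewrite -sum1_card big_mkcond /count_words (reindex finfun_of_tuple) /=.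
  by apply: eq_bigr => w _; rewrite inE /word finfun_of_tupleK; case: (P w).
by exists tuple_of_finfun => f _; rewrite ?finfun_of_tupleK ?tuple_of_finfunK.
Qed.

Definition sierp_code n t (c : 'I_n) : {set sword n t} :=
  [set f | accept (if odd t then Some c else None) (word f)].

Lemma sierp_code_dominating n t (c : 'I_n) :
  dominating (@sierp_adj n t) (sierp_code t c).
Proof.
apply/forallP => f.
have : dominated (accept (if odd t then Some c else None)) (word f).
  apply: dominated_accept; rewrite /odd_constant.
  by case: ifP => /= odd_t; rewrite size_word odd_t.
case=> [acc | [v /word_adj_sierp [g <- fg] acc]]; first by rewrite inE acc.
by apply/orP; right; apply/existsP; exists g; rewrite inE acc fg.
Qed.

Lemma sierp_code_card n t (c : 'I_n) : #|sierp_code t c| = (n ^ t + n) %/ n.+1.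
Proof.
have n_gt0 : 0 < #|'I_n| by rewrite card_ord (leq_ltn_trans (leq0n c) (ltn_ord c)).
have [count_some count_none] := count_accept t n_gt0.
rewrite card_ord in n_gt0 count_some count_none.
rewrite count_sword; case: ifP => odd_t.
  have := count_some c; rewrite odd_t /= => count_eq.
  rewrite (_ : n ^ t + n = count_words t (accept (Some c)) * n.+1 + n.-1); last by lia.
  by rewrite divnMDl // divn_small ?addn0 //; lia.
move: count_none; rewrite odd_t /= muln0 muln1 addn0 => <-.
by rewrite mulKn.
Qed.

Theorem theorem3p1 (n t : nat) : 2 <= n -> 0 < t ->
  domination_number (@sierp_adj n t) = (n ^ t + n) %/ n.+1.
Proof.
move=> n_ge2; case: t => [//|t] _.
pose c : 'I_n := Ordinal (ltnW n_ge2).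
have lower := @sierp_domination_lower n t.
apply: (@bigmin_nat_attained _ _ _ _ _ (sierp_code t.+1 c)).
- exact: sierp_code_dominating.
- exact: sierp_code_card.
- by rewrite -cardsT; apply: lower; apply/forallP => x; rewrite in_setT.
- exact: lower.
Qed.
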